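(* For every $d<\omega$ and every $C\subseteq(2^2)^d$, $C$ is a wide right-$\omega$-comb if and only if no two-element subset of $C$ is an up-$1$-comb.
   Context: $2^2=\{0,1\}^2$; $(2^2)^d$ is the set of sequences of length $d$ with entries in $2^2$, $(2^2)^{<d}$ those of length $<d$, $\tau^\frown a$ concatenation; ''extends'' means has as initial segment. For $A,B\subseteq(2^2)^d$: $A$ is narrowly below $B$ if there are $\tau\in(2^2)^{<d}$, $i<2$ with all elements of $A$ extending $\tau^\frown(i,0)$ and all of $B$ extending $\tau^\frown(i,1)$; $A$ is narrowly to the left of $B$ if there are $\tau$, $j<2$ with all elements of $A$ extending $\tau^\frown(0,j)$ and all of $B$ extending $\tau^\frown(1,j)$; $A$ is widely to the left of $B$ if there is $\sigma\in(2^2)^{<d}$ with all elements of $A$ extending $\sigma^\frown(0,0)$ or $\sigma^\frown(0,1)$ and all of $B$ extending $\sigma^\frown(1,0)$ or $\sigma^\frown(1,1)$. For $n\le\omega$: up-$n$-combs form the smallest class of finite sets containing singletons and containing $A\cup B$ whenever $A,B$ are up-$n$-combs, $|A|\le n$ and $A$ is narrowly below $B$; right-$n$-combs likewise with ''narrowly to the left of''; wide right-$n$-combs form the smallest class containing singletons and containing $A\cup B$ whenever $A,B$ are right-$n$-combs, $|A|\le n$ and $A$ is widely to the left of $B$. *)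

From mathcomp Require Import all_boot.
Set Implicit Arguments. Unset Strict Implicit. Unset Printing Implicit Defensive.

(* 2^2 = {0,1}^2 is bool * bool (false = 0, true = 1);
   (2^2)^d is d.-tuple (bool * bool). *)
Definition node := (bool * bool)%type.
Definition seqd (d : nat) := (d.-tuple node)%type.

Definition extends d (x : seqd d) (s : seq node) : Prop := prefix s (val x).

Inductive cbound := Fin of nat | Omega.
Definition le_bound (k : nat) (n : cbound) : Prop :=
  match n with Fin m => k <= m | Omega => True end.

Definition narrowly_below d (A B : {set seqd d}) : Prop :=
  exists (tau : seq node) (i : bool), size tau < d /\
    (forall x, x \in A -> extends x (rcons tau (i, false))) /\
    (forall y, y \in B -> extends y (rcons tau (i, true))).

Definition narrowly_left d (A B : {set seqd d}) : Prop :=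
  exists (tau : seq node) (j : bool), size tau < d /\
    (forall x, x \in A -> extends x (rcons tau (false, j))) /\
    (forall y, y \in B -> extends y (rcons tau (true, j))).

Definition widely_left d (A B : {set seqd d}) : Prop :=
  exists (sigma : seq node), size sigma < d /\
    (forall x, x \in A -> extends x (rcons sigma (false, false))
                       \/ extends x (rcons sigma (false, true))) /\
    (forall y, y \in B -> extends y (rcons sigma (true, false))
                       \/ extends y (rcons sigma (true, true))).

Inductive up_comb d (n : cbound) : {set seqd d} -> Prop :=
| up_single (x : seqd d) : up_comb n [set x]
| up_union (A B : {set seqd d}) : up_comb n A -> up_comb n B ->
    le_bound #|A| n -> narrowly_below A B -> up_comb n (A :|: B).

Inductive right_comb d (n : cbound) : {set seqd d} -> Prop :=
| right_single (x : seqd d) : right_comb n [set x]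
| right_union (A B : {set seqd d}) : right_comb n A -> right_comb n B ->
    le_bound #|A| n -> narrowly_left A B -> right_comb n (A :|: B).

Inductive wide_right_comb d (n : cbound) : {set seqd d} -> Prop :=
| wide_single (x : seqd d) : wide_right_comb n [set x]
| wide_union (A B : {set seqd d}) : wide_right_comb n A -> wide_right_comb n B ->
    le_bound #|A| n -> widely_left A B -> wide_right_comb n (A :|: B).

From mathcomp Require Import all_boot.
Set Implicit Arguments. Unset Strict Implicit. Unset Printing Implicit Defensive.

(* Two distinct sequences fork at a unique position, the first one where they
   differ.  The pair {x, y} is an up-1-comb exactly when their nodes at the
   fork have equal first coordinates, whereas if A lies widely to the left of
   B, every fork between A and B separates first coordinates; so wide
   right-combs contain no up-1-comb pairs.  Conversely, if C contains none,
   split C at the first position where its elements differ, according to the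
   first coordinate of the node there: both halves are non-empty, the first
   lies widely to the left of the second, and induction on #|C| concludes. *)

Definition node0 : node := (false, false).

Lemma extends_rcons d (x : seqd d) s a :
  extends x (rcons s a) <->
  [/\ size s < d, take (size s) x = s & nth node0 x (size s) = a].
Proof.
rewrite /extends prefixE size_rcons; split=> [/eqP ext_x | [lt_s_d xs xa]].
  have lt_s_d : size s < d.
    move: (congr1 size ext_x); rewrite size_take size_rcons size_tuple.
    by case: ltnP => [/ltnW | _ ->].
  by move: ext_x; rewrite (take_nth node0) ?size_tuple // => /rcons_inj[].
by rewrite (take_nth node0) ?size_tuple // xs xa.
Qed.

Lemma fork_common_prefix d (x y : seqd d) s a b n : a != b ->
  extends x (rcons s a) -> extends y (rcons s b) ->
  take n x = take n y -> n <= size s.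
Proof.
move=> neq_ab /extends_rcons[_ _ xa] /extends_rcons[_ _ yb] eq_take.
rewrite leqNgt; apply: contra neq_ab => lt_s_n.
by rewrite -xa -yb -(nth_take _ lt_s_n) eq_take nth_take.
Qed.

Lemma fork_unique d (x y : seqd d) s t a b c e : a != b -> c != e ->
  extends x (rcons s a) -> extends y (rcons s b) ->
  extends x (rcons t c) -> extends y (rcons t e) -> a = c /\ b = e.
Proof.
move=> neq_ab neq_ce xa yb xc ye.
move: (xa) (yb) (xc) (ye) => /extends_rcons[_ xs <-] /extends_rcons[_ ys <-].
move=> /extends_rcons[_ xt <-] /extends_rcons[_ yt <-].
suff -> : size s = size t by [].
apply/eqP; rewrite eqn_leq; apply/andP; split.
- by apply: fork_common_prefix neq_ce xc ye _; rewrite xs ys.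
- by apply: fork_common_prefix neq_ab xa yb _; rewrite xt yt.
Qed.

Lemma narrowly_below1 d (x y : seqd d) :
  narrowly_below [set x] [set y] <->
  exists tau i, extends x (rcons tau (i, false)) /\ extends y (rcons tau (i, true)).
Proof.
split=> [[tau [i [_ [Hx Hy]]]] | [tau [i [xi yi]]]].
  by exists tau, i; split; [apply: Hx | apply: Hy]; rewrite set11.
exists tau, i; split; first by case/extends_rcons: xi.
by split=> w /set1P ->.
Qed.

Lemma narrowly_below11 d (x : seqd d) : ~ narrowly_below [set x] [set x].
Proof.
case/narrowly_below1=> tau [i [/extends_rcons[_ _ xi] /extends_rcons[_ _]]].
by rewrite xi => -[].
Qed.

Lemma narrowly_belowS d (A B A' B' : {set seqd d}) :
  A' \subset A -> B' \subset B -> narrowly_below A B -> narrowly_below A' B'.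
Proof.
move=> /subsetP sA /subsetP sB [tau [i [lt_tau [HA HB]]]].
by exists tau, i; split=> //; split=> w w_in; [apply: HA | apply: HB]; auto.
Qed.

Lemma up_comb_neq0 d n (S : {set seqd d}) : up_comb n S -> S != set0.
Proof.
elim=> [x | A B _ A0 _ _ _ _]; first by apply/set0Pn; exists x; rewrite set11.
by rewrite setU_eq0 negb_and A0.
Qed.

Lemma up_comb_narrowly_below d n (S : {set seqd d}) : up_comb n S -> 1 < #|S| ->
  exists x y, [/\ x \in S, y \in S & narrowly_below [set x] [set y]].
Proof.
case=> [x | A B uA uB _ AB _]; first by rewrite cards1.
have [x xA] := set0Pn _ (up_comb_neq0 uA); have [y yB] := set0Pn _ (up_comb_neq0 uB).
exists x, y; split; rewrite ?inE ?xA ?yB ?orbT //.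
by apply: narrowly_belowS AB; rewrite sub1set.
Qed.

Lemma up_comb_pair d n (x y : seqd d) : le_bound 1 n ->
  narrowly_below [set x] [set y] -> up_comb n [set x; y].
Proof.
by move=> le1n xy; apply: up_union; rewrite ?cards1 //; apply: up_single.
Qed.

Definition narrowly_below_free d (C : {set seqd d}) : Prop :=
  forall x y, x \in C -> y \in C -> ~ narrowly_below [set x] [set y].

Lemma narrowly_below_freeP d (C : {set seqd d}) :
  narrowly_below_free C <->
  (forall S : {set seqd d}, S \subset C -> #|S| = 2 -> ~ up_comb (Fin 1) S).
Proof.
split=> [free S SC S2 /up_comb_narrowly_below | noUp x y xC yC xy].
  by rewrite S2 => -[// | x [y [xS yS]]]; apply: free; apply: (subsetP SC).
apply: (noUp [set x; y]); first by rewrite subUset !sub1set xC yC.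
  by rewrite cards2; case: eqVneq xy => // -> /narrowly_below11.
exact: up_comb_pair.
Qed.

Lemma widely_left_narrowly_below d (A B : {set seqd d}) x y :
  widely_left A B -> x \in A -> y \in B ->
  ~ narrowly_below [set x] [set y] /\ ~ narrowly_below [set y] [set x].
Proof.
move=> [sg [_ [HA HB]]] xA yB.
have [jx xs] : exists j, extends x (rcons sg (false, j)).
  by case: (HA x xA); eexists; eassumption.
have [jy ys] : exists j, extends y (rcons sg (true, j)).
  by case: (HB y yB); eexists; eassumption.
have neq_snd (i : bool) : (i, false) != (i, true) by rewrite xpair_eqE eqxx.
have neq_fst (j c c' : bool) : (j, c) != (~~ j, c') by case: j.
split=> /narrowly_below1[tau [i [ui vi]]].
- have [[i0 _] [i1 _]] := fork_unique (neq_snd i) (neq_fst _ jx jy) ui vi xs ys.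
  by rewrite i0 in i1.
- have [[i1 _] [i0 _]] := fork_unique (neq_snd i) (neq_fst _ jy jx) ui vi ys xs.
  by rewrite i0 in i1.
Qed.

Lemma wide_right_comb_narrowly_below_free d n (C : {set seqd d}) :
  wide_right_comb n C -> narrowly_below_free C.
Proof.
elim=> {C} [z | A B _ freeA _ freeB _ AB] x y.
  by rewrite !inE => /eqP -> /eqP ->; apply: narrowly_below11.
rewrite !inE => /orP[xA | xB] /orP[yA | yB].
- exact: freeA.
- exact: (widely_left_narrowly_below AB xA yB).1.
- exact: (widely_left_narrowly_below AB yA xB).2.
- exact: freeB.
Qed.

Lemma fork_fst_neq d (C : {set seqd d}) x y s a b : narrowly_below_free C ->
  x \in C -> y \in C -> extends x (rcons s a) -> extends y (rcons s b) ->
  a != b -> a.1 != b.1.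
Proof.
move=> free xC yC; case: a b => [i j] [i' j'] xs ys /=.
apply: contra_neq => eq_i; subst i'; case: j j' xs ys => [] [] // xs ys.
- by case: (free y x yC xC); apply/narrowly_below1; exists s, i.
- by case: (free x y xC yC); apply/narrowly_below1; exists s, i.
Qed.

Lemma exists_fork d (C : {set seqd d}) y z : y \in C -> z \in C -> y != z ->
  exists s, (forall w, w \in C -> extends w (rcons s (nth node0 w (size s)))) /\
    exists x1 x2, [/\ x1 \in C, x2 \in C &
                      nth node0 x1 (size s) != nth node0 x2 (size s)].
Proof.
move=> yC zC neq_yz.
pose P k := [exists x1 in C, exists x2 in C, nth node0 x1 k != nth node0 x2 k].
have [i Pi] : exists i, P i.
  have : ~~ [forall i : 'I_d, nth node0 y i == nth node0 z i].
    apply: contra neq_yz => /forallP eq_yz; apply/eqP/val_inj.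
    apply: (eq_from_nth (x0 := node0)); rewrite ?size_tuple // => i lt_id.
    exact/eqP/(eq_yz (Ordinal lt_id)).
  rewrite negb_forall => /existsP[i neq_i]; exists i.
  by apply/existsP; exists y; rewrite yC; apply/existsP; exists z; rewrite zC.
case: (ex_minnP (ex_intro P i Pi)) => k.
move=> /existsP[x1 /andP[x1C /existsP[x2 /andP[x2C neq_k]]]] min_k.
have lt_kd : k < d.
  by rewrite ltnNge; apply: contra neq_k => le_dk; rewrite !nth_default ?size_tuple.
have agree w j : w \in C -> j < k -> nth node0 w j = nth node0 y j.
  move=> wC lt_jk; apply: contraTeq lt_jk => neq_j; rewrite -leqNgt; apply: min_k.
  by apply/existsP; exists w; rewrite wC; apply/existsP; exists y; rewrite yC.
have size_s : size (take k y) = k by rewrite size_takel // size_tuple ltnW.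
exists (take k y); rewrite size_s; split; last by exists x1, x2.
move=> w wC; apply/extends_rcons; rewrite size_s; split=> //.
have size_w : size (take k w) = k by rewrite size_takel // size_tuple ltnW.
apply: (eq_from_nth (x0 := node0)); rewrite size_w ?size_s // => j lt_jk.
by rewrite !nth_take // agree.
Qed.

Lemma card_sep_lt (T : finType) (C : {set T}) (p : pred T) x :
  x \in C -> ~~ p x -> #|[set w in C | p w]| < #|C|.
Proof.
move=> xC npx; apply: proper_card; apply/properP; split.
  by apply/subsetP=> w; rewrite inE => /andP[].
by exists x; rewrite // inE (negbTE npx) andbF.
Qed.

Lemma narrowly_below_free_wide_right_comb d (C : {set seqd d}) :
  C != set0 -> narrowly_below_free C -> wide_right_comb Omega C.
Proof.
have [n] := ubnP #|C|; elim: n C => // n IH C lt_Cn C0 free.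
have [x xC] := set0Pn _ C0.
have [C1 | /subsetPn[y yC]] := boolP (C \subset [set x]).
  have -> : C = [set x] by apply/eqP; rewrite eqEsubset C1 sub1set xC.
  exact: wide_single.
rewrite in_set1 => neq_yx.
have [s [Cs [x1 [x2 [x1C x2C neq_x12]]]]] := exists_fork yC xC neq_yx.
pose f w := (nth node0 w (size s)).1.
have neq_f : f x1 != f x2 := fork_fst_neq free x1C x2C (Cs _ x1C) (Cs _ x2C) neq_x12.
have [a [b [aC bC fa fb]]] : exists a b, [/\ a \in C, b \in C, ~~ f a & f b].
  by move: neq_f; case f1: (f x1); case f2: (f x2) => // _;
    [exists x2, x1 | exists x1, x2]; rewrite f1 f2.
have comb_sep (p : pred (seqd d)) u v : u \in C -> p u -> v \in C -> ~~ p v ->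
    wide_right_comb Omega [set w in C | p w].
  move=> uC pu vC npv; apply: IH.
  - exact: leq_trans (card_sep_lt vC npv) lt_Cn.
  - by apply/set0Pn; exists u; rewrite inE uC.
  - by move=> u' v'; rewrite !inE => /andP[u'C _] /andP[v'C _]; apply: free.
have -> : C = [set w in C | ~~ f w] :|: [set w in C | f w].
  by apply/setP=> w; rewrite !inE -andb_orr orNb andbT.
apply: wide_union => //.
- by apply: (comb_sep (fun w => ~~ f w) a b) => //; rewrite negbK.
- exact: (comb_sep f b a).
exists s; split; first by have /extends_rcons[] := Cs _ aC.
by split=> w; rewrite inE => /andP[wC fw]; move: (Cs w wC) fw; rewrite /f;
  (case: (nth node0 w (size s)) => [[] []] //= ext _; [right | left]).
Qed.

Theorem lemma4p5 (d : nat) (C : {set seqd d}) :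
  C != set0 ->
  (wide_right_comb Omega C <->
   (forall S : {set seqd d}, S \subset C -> #|S| = 2 -> ~ up_comb (Fin 1) S)).
Proof.
move=> C0; split.
- by move/wide_right_comb_narrowly_below_free/narrowly_below_freeP.
- by move/narrowly_below_freeP; apply: narrowly_below_free_wide_right_comb.
Qed.
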